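(* For every $n\ge1$ and $i=1,2$, the formal semigroup $\mathcal{S}_{K_i}$ is not closed under addition (hence not a semigroup); indeed $4\in\mathcal{S}_{K_i}$ but $4n+4\notin\mathcal{S}_{K_i}$. Here $K_1,K_2$ are the closures of $(\sigma_2\sigma_1\sigma_3\sigma_2)(\sigma_1\sigma_2\sigma_3)^{4n}\sigma_2^{-1}(\sigma_2\sigma_3)^6$ and $(\sigma_2\sigma_1\sigma_3\sigma_2)(\sigma_1\sigma_2\sigma_3)^{4n}\sigma_3^{-1}(\sigma_2\sigma_3)^6$.
   Context: For a knot $K$ whose Alexander polynomial, normalized to be a polynomial with constant term $1$, is $\Delta_K(t)$, the formal semigroup $\mathcal{S}_K\subset\mathbb{Z}_{\ge0}$ is defined by $\Delta_K(t)/(1-t)=\sum_{s\in\mathcal{S}_K}t^s$. $\sigma_i$ are the standard generators of the $4$--strand braid group. *)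

From HB Require Import structures.
From mathcomp Require Import all_boot all_order all_algebra fraction.
Set Implicit Arguments. Unset Strict Implicit. Unset Printing Implicit Defensive.
Import Order.TTheory GRing.Theory Num.Theory.
Local Open Scope ring_scope.

(* The field of rational functions Q(t), realised as fractions of {poly int}. *)
Definition ratfun := {fraction {poly int}}.
Definition tofrac (p : {poly int}) : ratfun := @FracField.tofrac _ p.
Definition tvar : ratfun := tofrac 'X.

(* A braid word: letter (i, true) = sigma_i, (i, false) = sigma_i^{-1}. *)
Definition braid_word := seq (nat * bool).

(* Reduced Burau matrix of sigma_i in B_n (size (n-1) x (n-1), 1-based
   generators 1 <= i <= n-1); rows/columns indexed 0..n-2 stand for 1..n-1.
   Row i is ( .. , t, -t, 1, .. ) at columns i-1, i, i+1; other rows are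
   those of the identity. *)
Definition burau_gen (n i : nat) : 'M[ratfun]_(n.-1) :=
  \matrix_(r < n.-1, c < n.-1)
    if (r : nat).+1 == i then
      (if (c : nat).+2 == i then tvar
       else if (c : nat).+1 == i then - tvar
       else if (c : nat) == i then 1 else 0)
    else ((r : nat) == c)%:R.

Definition burau_letter (n : nat) (l : nat * bool) : 'M[ratfun]_(n.-1) :=
  if l.2 then burau_gen n l.1 else invmx (burau_gen n l.1).

Definition burau (n : nat) (w : braid_word) : 'M[ratfun]_(n.-1) :=
  foldr (fun l M => burau_letter n l *m M) 1%:M w.

(* p is the Alexander polynomial of the closure of the n-strand braid w,
   normalized to be a polynomial with constant term 1:
   p = +-t^k (1-t)/(1-t^n) det(I - Burau(w)) for some k : int. *)
Definition is_normalized_alexander (n : nat) (w : braid_word)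
    (p : {poly int}) : Prop :=
  p`_0 = 1 /\
  exists (e : bool) (k : int),
    tofrac p = (-1) ^+ e * tvar ^ k * ((1 - tvar) / (1 - tvar ^+ n)) *
           \det (1%:M - burau n w).

(* Formal semigroup: Delta(t)/(1-t) = sum_{s in S} t^s, i.e. the coefficient
   of t^s in Delta(t)/(1-t), namely sum_{j <= s} p_j, equals 1. *)
Definition in_formal_semigroup (p : {poly int}) (s : nat) : Prop :=
  \sum_(j < s.+1) p`_j = 1.

Definition K_word (n i : nat) : braid_word :=
  [:: (2, true); (1, true); (3, true); (2, true)]%N
  ++ flatten (nseq (4 * n) [:: (1, true); (2, true); (3, true)]%N)
  ++ [:: (i.+1, false)]
  ++ flatten (nseq 6 [:: (2, true); (3, true)]%N).

From Pilot Require Import Defs.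
From HB Require Import structures.
From mathcomp Require Import all_boot all_order all_algebra fraction.
From mathcomp Require Import ring zify.
Set Implicit Arguments. Unset Strict Implicit. Unset Printing Implicit Defensive.
Import Order.TTheory GRing.Theory Num.Theory.
Local Open Scope ring_scope.

(* The reduced Burau matrix of the full twist (s1 s2 s3)^4 in B_4 is the
   scalar t^4, so with x = t^(4n) the Burau matrix of K_i is x M_i for a matrix
   M_i not depending on n, and det(I - x M_i) = 1 + A_i x + B_i x^2 + t^15 x^3.
   Dividing by 1 + t + t^2 + t^3 gives Delta, whose partial sums at multiples
   of 4 are the partial sums of the coefficients of det(I - x M_i) at multiples
   of 4. As A_i and B_i have no constant term, these coefficients vanish at
   4, ..., 4n, whereas at 4n + 4 the coefficient is the t^4-coefficient -1 of
   A_i. *)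

Ltac mx3_entrywise :=
  apply/matrixP => -[[|[|[|?]]] ?] // -[[|[|[|?]]] ?] //; rewrite !mxE.

Section Matrix3.

Variable R : comNzRingType.

Definition mx3 (a b c d e f g h k : R) : 'M[R]_3 :=
  \matrix_(i, j) nth 0 (nth [::] [:: [:: a; b; c]; [:: d; e; f]; [:: g; h; k]] i) j.

Lemma mul_mx3 a b c d e f g h k a' b' c' d' e' f' g' h' k' :
  mx3 a b c d e f g h k *m mx3 a' b' c' d' e' f' g' h' k' =
  mx3 (a * a' + b * d' + c * g') (a * b' + b * e' + c * h') (a * c' + b * f' + c * k')
      (d * a' + e * d' + f * g') (d * b' + e * e' + f * h') (d * c' + e * f' + f * k')
      (g * a' + h * d' + k * g') (g * b' + h * e' + k * h') (g * c' + h * f' + k * k').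
Proof. by mx3_entrywise; rewrite !big_ord_recr big_ord0 /= !mxE add0r. Qed.

Lemma scalar_mx3 a : a%:M = mx3 a 0 0 0 a 0 0 0 a.
Proof. by mx3_entrywise. Qed.

Lemma scalar_mx3_exp a k :
  a%:M ^+ k = mx3 (a ^+ k) 0 0 0 (a ^+ k) 0 0 0 (a ^+ k).
Proof. by rewrite -rmorphXn; mx3_entrywise. Qed.

Lemma sub_mx3 a b c d e f g h k a' b' c' d' e' f' g' h' k' :
  mx3 a b c d e f g h k - mx3 a' b' c' d' e' f' g' h' k' =
  mx3 (a - a') (b - b') (c - c') (d - d') (e - e') (f - f') (g - g') (h - h') (k - k').
Proof. by mx3_entrywise. Qed.

Lemma det_mx3 a b c d e f g h k :
  \det (mx3 a b c d e f g h k) =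
  a * e * k - a * f * h - b * d * k + b * f * g + c * d * h - c * e * g.
Proof.
rewrite (expand_det_row _ ord0) !big_ord_recr big_ord0 /= /cofactor.
do 3 rewrite (expand_det_row _ ord0) !big_ord_recr big_ord0 /= /cofactor !det_mx11.
by rewrite !mxE /=; ring.
Qed.

End Matrix3.

Ltac mx3_ring := rewrite ?mul_mx3; congr mx3; ring.

Local Notation t := tvar.

HB.instance Definition _ := GRing.RMorphism.copy Defs.tofrac (@FracField.tofrac _).

(* Stated for the canonical morphism, the form produced by the rmorph lemmas. *)
Lemma tofrac_X : (Defs.tofrac : {rmorphism _ -> _}) 'X = t. Proof. by []. Qed.

Lemma tvar_neq0 : t != 0.
Proof. by rewrite tofrac_eq0 polyX_eq0. Qed.

Lemma burau_sigma1 : burau_gen 4 1 = mx3 (- t) 1 0 0 1 0 0 0 1.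
Proof. by mx3_entrywise. Qed.

Lemma burau_sigma2 : burau_gen 4 2 = mx3 1 0 0 t (- t) 1 0 0 1.
Proof. by mx3_entrywise. Qed.

Lemma burau_sigma3 : burau_gen 4 3 = mx3 1 0 0 0 1 0 0 t (- t).
Proof. by mx3_entrywise. Qed.

Lemma burau_cat m w1 w2 : burau m (w1 ++ w2) = burau m w1 *m burau m w2.
Proof.
by elim: w1 => [|l w IH] /=; rewrite ?mul1mx // /burau /= -!/(burau _ _) IH mulmxA.
Qed.

Lemma burau_flatten_nseq m w k : burau m (flatten (nseq k w)) = burau m w ^+ k.
Proof. by elim: k => [|k IH]; rewrite ?expr0 // burau_cat IH exprS. Qed.

Lemma burau_inv_letter m j : burau m [:: (j, false)] = invmx (burau_gen m j).
Proof. exact: mulmx1. Qed.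

Lemma burau_sigma123 :
  burau 4 [:: (1, true); (2, true); (3, true)]%N = mx3 0 0 (- t) t 0 (- t) 0 t (- t).
Proof.
rewrite /burau /= /burau_letter /= burau_sigma1 burau_sigma2 burau_sigma3 mulmx1.
by mx3_ring.
Qed.

Lemma burau_full_twist :
  burau 4 [:: (1, true); (2, true); (3, true)]%N ^+ 4 = (t ^+ 4)%:M.
Proof.
have sq : burau 4 [:: (1, true); (2, true); (3, true)]%N ^+ 2 =
          mx3 0 (- t ^+ 2) (t ^+ 2) 0 (- t ^+ 2) 0 (t ^+ 2) (- t ^+ 2) 0.
  by rewrite expr2 -mulmxE burau_sigma123; mx3_ring.
by rewrite (exprM _ 2 2) sq expr2 -mulmxE scalar_mx3; mx3_ring.
Qed.

Lemma burau_sigma23_pow6 :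
  burau 4 [:: (2, true); (3, true)]%N ^+ 6 =
  mx3 1 0 0 (t - t ^+ 3 + t ^+ 4 - t ^+ 6) (t ^+ 6) 0
      (t ^+ 2 - t ^+ 3 + t ^+ 5 - t ^+ 6) 0 (t ^+ 6).
Proof.
have cube : burau 4 [:: (2, true); (3, true)]%N ^+ 3 =
            mx3 1 0 0 (t - t ^+ 3) (t ^+ 3) 0 (t ^+ 2 - t ^+ 3) 0 (t ^+ 3).
  rewrite /burau /= /burau_letter /= burau_sigma2 burau_sigma3 mulmx1.
  by rewrite !exprS expr0 mulr1 -!mulmxE; mx3_ring.
by rewrite (exprM _ 3 2) cube expr2 -mulmxE; mx3_ring.
Qed.

Lemma burau_sigma2132 :
  burau 4 [:: (2, true); (1, true); (3, true); (2, true)]%N =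
  mx3 0 (- t) 1 0 (- t ^+ 2) 0 (t ^+ 2) (- t ^+ 2) 0.
Proof.
rewrite /burau /= /burau_letter /= burau_sigma1 burau_sigma2 burau_sigma3 mulmx1.
by mx3_ring.
Qed.

Lemma burau_K_word m n i :
  burau m (K_word n i) =
  burau m [:: (2, true); (1, true); (3, true); (2, true)]%N
  *m (burau m [:: (1, true); (2, true); (3, true)]%N ^+ 4) ^+ n
  *m invmx (burau_gen m i.+1) *m burau m [:: (2, true); (3, true)]%N ^+ 6.
Proof.
rewrite /K_word (burau_cat _ [:: _; _; _; _]) (burau_cat _ (flatten _)).
by rewrite (burau_cat _ [:: _]) !burau_flatten_nseq burau_inv_letter exprM 2!mulmxA.
Qed.

Lemma unitmx_burau_sigma j : (j == 2)%N || (j == 3)%N -> burau_gen 4 j \in unitmx.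
Proof.
move=> j23; have det_sigma : \det (burau_gen 4 j) = - t.
  by case/orP: j23 => /eqP ->; rewrite ?burau_sigma2 ?burau_sigma3 det_mx3; ring.
by rewrite unitmxE unitfE det_sigma oppr_eq0 tvar_neq0.
Qed.

Definition twist_coef1 (i : nat) : {poly int} :=
  'X^3 - 'X^4 + 'X^6 + (i == 2)%:R * ('X^8 - 'X^7).

Definition twist_coef2 (i : nat) : {poly int} :=
  'X^9 - 'X^11 + 'X^12 + (i == 2)%:R * ('X^7 - 'X^8).

Definition twist_coef3 : {poly int} := 'X^15.

Definition twist_det (n i : nat) : {poly int} :=
  1 + twist_coef1 i * 'X^(4 * n) + twist_coef2 i * 'X^(4 * n) ^+ 2
    + twist_coef3 * 'X^(4 * n) ^+ 3.

Lemma invmx_burau_sigma_mul_pow6 i : (i == 1)%N || (i == 2)%N ->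
  invmx (burau_gen 4 i.+1) *m burau 4 [:: (2, true); (3, true)]%N ^+ 6 =
  if i == 1%N then
    mx3 1 0 0 (t - t ^+ 3 + t ^+ 4) (- t ^+ 5) (t ^+ 5)
        (t ^+ 2 - t ^+ 3 + t ^+ 5 - t ^+ 6) 0 (t ^+ 6)
  else
    mx3 1 0 0 (t - t ^+ 3 + t ^+ 4 - t ^+ 6) (t ^+ 6) 0
        (t ^+ 2 - t ^+ 3 + t ^+ 5 - t ^+ 6) (t ^+ 6) (- t ^+ 5).
Proof.
move=> i12; apply: (canLR (mulKmx (@unitmx_burau_sigma i.+1 i12))).
case/orP: i12 => /eqP ->;
  by rewrite burau_sigma23_pow6 ?burau_sigma2 ?burau_sigma3; mx3_ring.
Qed.

Lemma det_burau_K_word n i : (i == 1)%N || (i == 2)%N ->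
  \det (1%:M - burau 4 (K_word n i)) = Defs.tofrac (twist_det n i).
Proof.
move=> i12; rewrite burau_K_word burau_full_twist scalar_mx3_exp -exprM -mulmxA.
rewrite invmx_burau_sigma_mul_pow6 // burau_sigma2132 scalar_mx3.
rewrite /twist_det /twist_coef1 /twist_coef2 /twist_coef3.
case/orP: i12 => /eqP -> /=; rewrite ?mul0r ?mul1r ?addr0;
  rewrite !(rmorphD, rmorphB, rmorphM, rmorphXn, rmorph1) tofrac_X;
  rewrite !mul_mx3 sub_mx3 det_mx3; ring.
Qed.

Lemma coef_twist_det n i j : (twist_det n i)`_j =
  (j == 0%N)%:R + (if (j < 4 * n)%N then 0 else (twist_coef1 i)`_(j - 4 * n))
  + (if (j < 8 * n)%N then 0 else (twist_coef2 i)`_(j - 8 * n))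
  + (if (j < 12 * n)%N then 0 else twist_coef3`_(j - 12 * n)).
Proof.
rewrite /twist_det -!exprM 3!coefD coef1 !coefMXn.
by rewrite (mulnAC 4 n 2) (mulnAC 4 n 3).
Qed.

Lemma twist_coef1_0 i : (twist_coef1 i)`_0 = 0.
Proof.
by rewrite /twist_coef1 mulr_natl !(coefD, coefN, coefMn, coefXn) /= !(oppr0, addr0, mul0rn).
Qed.

Lemma twist_coef1_4 i : (twist_coef1 i)`_4 = -1.
Proof.
rewrite /twist_coef1 mulr_natl !(coefD, coefN, coefMn, coefXn) /=.
by rewrite !(oppr0, addr0, add0r, mul0rn).
Qed.

Lemma twist_coef2_0 i : (twist_coef2 i)`_0 = 0.
Proof.
by rewrite /twist_coef2 mulr_natl !(coefD, coefN, coefMn, coefXn) /= !(oppr0, addr0, mul0rn).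
Qed.

Lemma coef_twist_det0 n i : (0 < n)%N -> (twist_det n i)`_0 = 1.
Proof. by move=> n_gt0; rewrite coef_twist_det !muln_gt0 n_gt0 /= !addr0. Qed.

Lemma coef_twist_det_mul4 n i k : (0 < k <= n)%N -> (twist_det n i)`_(4 * k) = 0.
Proof.
move=> k_range; rewrite coef_twist_det muln_eq0 /=.
have lt8 : (4 * k < 8 * n)%N by lia.
have lt12 : (4 * k < 12 * n)%N by lia.
have k_neq0 : (k == 0%N) = false by lia.
rewrite lt8 lt12 k_neq0 !addr0 add0r.
case: ltnP => // k_ge_n; have -> : (4 * k - 4 * n = 0)%N by lia.
exact: twist_coef1_0.
Qed.

Lemma coef_twist_det_succ n i : (0 < n)%N -> (twist_det n i)`_(4 * n.+1) = -1.
Proof.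
move=> n_gt0; rewrite coef_twist_det.
have ge4 : (4 * n.+1 < 4 * n)%N = false by lia.
have lt12 : (4 * n.+1 < 12 * n)%N by lia.
have -> : (4 * n.+1 - 4 * n = 4)%N by lia.
rewrite ge4 lt12 twist_coef1_4 addr0 add0r.
case: ltnP => [_ | ge8]; first by rewrite addr0.
have -> : n = 1%N by lia.
by rewrite twist_coef2_0 addr0.
Qed.

Lemma sum_coef_twist_det n i m : (0 < n)%N -> (m <= n)%N ->
  \sum_(k < m.+1) (twist_det n i)`_(4 * k) = 1.
Proof.
move=> n_gt0 m_le_n; rewrite big_ord_recl muln0 coef_twist_det0 // big1 ?addr0 //.
by move=> k _; apply: coef_twist_det_mul4; rewrite lift0; have := ltn_ord k; lia.
Qed.

Definition geom4 : {poly int} := 1 + 'X + 'X^2 + 'X^3.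

Lemma partial_sum_step (p : {poly int}) s :
  \sum_(j < s.+4.+1) p`_j = \sum_(j < s.+1) p`_j + (p * geom4)`_s.+4.
Proof.
rewrite /geom4 !mulrDr mulr1 !coefD coefMX !coefMXn /= !big_ord_recr /= !subSS !subn0.
by ring.
Qed.

Lemma partial_sum_mul4 (p : {poly int}) m :
  \sum_(j < (4 * m).+1) p`_j = \sum_(k < m.+1) (p * geom4)`_(4 * k).
Proof.
elim: m => [|m IH].
  by rewrite muln0 !big_ord1 coef0M /geom4 !coefD coef1 coefX !coefXn !addr0 mulr1.
by rewrite mulnS partial_sum_step IH [in RHS]big_ord_recr mulnS.
Qed.

Definition geomX4 (m : nat) : {poly int} := \sum_(k < m) 'X^(4 * k).

Lemma geomX4_mul m : geomX4 m * ('X^4 - 1) = 'X^(4 * m) - 1.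
Proof.
elim: m => [|m IH]; first by rewrite /geomX4 big_ord0 mul0r muln0 expr0 subrr.
by rewrite /geomX4 big_ord_recr /= mulrDl -/(geomX4 m) IH mulnS exprD; ring.
Qed.

(* The exact quotient of [twist_det n i] by [geom4], using
   x^k - 1 = (t^4 - 1) geomX4 (k n) for x = t^(4n); the first line is the
   quotient at n = 0. *)
Definition alexander_K (n i : nat) : {poly int} :=
  1 - 'X + 'X^3 - 'X^4 + 'X^6 - 'X^8 + 'X^9 - 'X^11 + 'X^12
  + ('X - 1) * (twist_coef1 i * geomX4 n + twist_coef2 i * geomX4 (2 * n)
                + twist_coef3 * geomX4 (3 * n)).

Lemma alexander_K_mul_geom4 n i : alexander_K n i * geom4 = twist_det n i.
Proof.
have -> : alexander_K n i * geom4 =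
    1 + twist_coef1 i * (geomX4 n * ('X^4 - 1) + 1)
      + twist_coef2 i * (geomX4 (2 * n) * ('X^4 - 1) + 1)
      + twist_coef3 * (geomX4 (3 * n) * ('X^4 - 1) + 1).
  by rewrite /alexander_K /geom4 /twist_coef1 /twist_coef2 /twist_coef3; ring.
by rewrite !geomX4_mul !subrK /twist_det -!exprM (mulnC _ 2) (mulnC _ 3) !mulnA.
Qed.

Lemma normalized_alexander_of_det w (p D : {poly int}) :
  p`_0 = 1 -> p * geom4 = D -> \det (1%:M - burau 4 w) = Defs.tofrac D ->
  is_normalized_alexander 4 w p.
Proof.
move=> p0 pD detD; split=> //; exists false, 0.
rewrite detD -pD rmorphM expr0 expr0z !mul1r.
set G := _ geom4; have GE : G = 1 + t + t ^+ 2 + t ^+ 3.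
  by rewrite /G /geom4 !rmorphD rmorph1 !rmorphXn tofrac_X.
have factor : 1 - t ^+ 4 = (1 - t) * G by rewrite GE; ring.
have den_neq0 : 1 - t ^+ 4 != 0.
  rewrite -tofrac_X -rmorphXn -(rmorph1 (Defs.tofrac : {rmorphism _ -> _})) -rmorphB.
  rewrite tofrac_eq0; apply/eqP => /(congr1 (coefp 0)).
  by rewrite /= coefB coef1 coefXn coef0.
by rewrite factor in den_neq0 *; rewrite mulrAC mulrCA mulfK.
Qed.

Lemma not_addn_closed (P : nat -> Prop) a m :
  P a -> ~ P (a * m.+1)%N -> ~ (forall x y, P x -> P y -> P (x + y)%N).
Proof.
move=> Pa notPam addP; apply: notPam.
elim: m => [|m IH]; first by rewrite muln1.
by rewrite mulnS; apply: addP.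
Qed.

Theorem corollary3p5 (n i : nat) (hn : (1 <= n)%N) (hi : (i == 1)%N || (i == 2)%N) :
  exists p : {poly int},
    is_normalized_alexander 4 (K_word n i) p /\
    in_formal_semigroup p 4 /\
    ~ in_formal_semigroup p (4 * n + 4) /\
    ~ (forall a b : nat, in_formal_semigroup p a -> in_formal_semigroup p b ->
         in_formal_semigroup p (a + b)).
Proof.
pose p := alexander_K n i; have pD := alexander_K_mul_geom4 n i.
have semigroupE m : in_formal_semigroup p (4 * m) <->
    \sum_(k < m.+1) (twist_det n i)`_(4 * k) = 1.
  by rewrite /in_formal_semigroup partial_sum_mul4 pD.
have S4 : in_formal_semigroup p 4 by apply/(semigroupE 1%N)/sum_coef_twist_det.
have notS : ~ in_formal_semigroup p (4 * n.+1).
  by rewrite semigroupE big_ord_recr /= sum_coef_twist_det // coef_twist_det_succ.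
exists p; split.
  apply: (normalized_alexander_of_det _ pD (det_burau_K_word n hi)).
  by have := partial_sum_mul4 p 0; rewrite !big_ord1 pD coef_twist_det0.
rewrite -mulnSr; split=> //; split=> //.
exact: not_addn_closed S4 notS.
Qed.
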